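(* For the invertible $N$-component coupled KdV hierarchy (defined in the context), the vector fields $K_s$ are local for all $s\in\mathbf Z$.
   Context: Let $N\ge1$, $\partial=\partial/\partial x$, $\partial^{-1}$ a formal inverse of $\partial$. Let $u_0,\dots,u_{N-1}$ be smooth functions of $(x,t)$ (the fields, $u=(u_0,\dots,u_{N-1})^T$), set $u_N=-1$, and let $\varepsilon_1,\dots,\varepsilon_{N-1}$ be real constants, $\varepsilon_0=\varepsilon_N=0$. Put $J_i=\frac14\varepsilon_i\partial^3+\frac12(u_i\partial+\partial u_i)$, so $J_0=\frac12(u_0\partial+\partial u_0)$ and $J_N=-\partial$; $J_0=u_0^{1/2}\partial u_0^{1/2}$ and $J_N$ are invertible. Formal adjoint: $\partial^\dagger=-\partial$, multiplication operators self-adjoint, $(AB)^\dagger=B^\dagger A^\dagger$, transpose for matrices. Let $B_0$ be the $N\times N$ matrix with $(B_0)_{ij}=-J_{i+j-1}$ if $i+j-1\le N$ and $0$ otherwise, and $R$ the $N\times N$ matrix with $R_{ij}=\delta_{i,j+1}$ ($1\le j\le N-1$), $R_{iN}=-J_{i-1}J_N^{-1}$; $R$ is invertible, and $B_r:=R^rB_0$ ($r\in\mathbf Z$). One-forms: $\gamma_0=(0,\dots,0,2)^T$, $\gamma_{-1}=(u_0^{-1/2},0,\dots,0)^T$, $\gamma_s=(R^\dagger)^s\gamma_0$ and $\gamma_{-s}=((R^{-1})^\dagger)^{s-1}\gamma_{-1}$ for $s\ge1$. The hierarchy consists of the flows $u_{t_{-s}}=K_{-s}:=B_r\gamma_{-r-s}$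 ($s\ge1$, any $r>-s$) and $u_{t_s}=K_s:=B_r\gamma_{-r+s+N}$ ($s\ge0$, any $r\le s+N$), these being independent of $r$; in particular $K_{-s}=B_0\gamma_{-s}$, $K_s=B_N\gamma_s=B_0\gamma_{s+N}$, $K_s=R^sK_0$, $K_{-s}=(R^{-1})^{s-1}K_{-1}$, and explicitly the $i$-th component of $K_0$ is $u_{i-1,x}$ (components $i=1,\dots,N$, $u_{-1}=0$). A vector field (or one-form) is local if each component is a function of the fields and finitely many of their $x$-derivatives (no $\partial^{-1}$ appears). *)

From HB Require Import structures.
From mathcomp Require Import all_boot all_order all_algebra.
From mathcomp Require Import reals.
Set Implicit Arguments. Unset Strict Implicit. Unset Printing Implicit Defensive.
Import Order.TTheory GRing.Theory Num.Theory.
Local Open Scope ring_scope.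

Definition is_derivation (R : realType) (B : comAlgType R) (d : B -> B) : Prop :=
  (forall x y, d (x + y) = d x + d y) /\
  (forall (c : R) x, d (c *: x) = c *: d x) /\
  (forall x y, d (x * y) = d x * y + x * d y).

(* Fields: u i (i < N); convention u_N = -1 (other indices unused). *)
Definition ufld (R : realType) (B : comAlgType R) (N : nat) (u : nat -> B)
  (i : nat) : B := if (i < N)%N then u i else if i == N then -1 else 0.

Definition epsf (R : realType) (N : nat) (eps : nat -> R) (i : nat) : R :=
  if (0 < i < N)%N then eps i else 0.

Definition Jop (R : realType) (B : comAlgType R) (N : nat) (d : B -> B)
  (eps : nat -> R) (u : nat -> B) (i : nat) (f : B) : B :=
  (epsf N eps i / 4) *: d (d (d f)) +
  (2^-1 : R) *: (ufld N u i * d f + d (ufld N u i * f)).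

(* Vectors are nat -> B; component c (0 <= c < N) is the paper's (c+1)-th
   component.  Rrel x y  <=>  y = R x, where the nonlocal J_N^{-1} x_N is some
   g in B with J_N g = x_N (R_{ij} = delta_{i,j+1} (j <= N-1),
   R_{iN} = -J_{i-1} J_N^{-1}). *)
Definition Rrel (R : realType) (B : comAlgType R) (N : nat) (d : B -> B)
  (eps : nat -> R) (u : nat -> B) (x y : nat -> B) : Prop :=
  exists g : B, Jop N d eps u N g = x N.-1 /\
    forall c, (c < N)%N ->
      y c = (if c is c'.+1 then x c' else 0) - Jop N d eps u c g.

Definition K0 (R : realType) (B : comAlgType R) (N : nat) (d : B -> B)
  (u : nat -> B) (c : nat) : B := d (ufld N u c).

(* K_{-1} = B_0 gamma_{-1}, gamma_{-1} = (u_0^{-1/2}, 0, ..., 0):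
   i-th component  -J_i u_0^{-1/2}. *)
Definition Km1 (R : realType) (B : comAlgType R) (N : nat) (d : B -> B)
  (eps : nat -> R) (u : nat -> B) (winv : B) (c : nat) : B :=
  - Jop N d eps u c.+1 winv.

(* Lc is the subalgebra of local elements: a differential R-subalgebra of B
   containing the fields u_i, u_0^{1/2} = w and u_0^{-1/2} = winv. *)
Definition local_subalg (R : realType) (B : comAlgType R) (N : nat)
  (d : B -> B) (u : nat -> B) (w winv : B) (Lc : B -> Prop) : Prop :=
  (forall i, (i < N)%N -> Lc (u i)) /\ Lc w /\ Lc winv /\ Lc 1 /\
  (forall x y, Lc x -> Lc y -> Lc (x + y)) /\
  (forall x y, Lc x -> Lc y -> Lc (x * y)) /\
  (forall (c : R) x, Lc x -> Lc (c *: x)) /\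
  (forall x, Lc x -> Lc (d x)).

(* The J_i satisfy a concomitant identity  a J_i b + b J_i a = (P_i(a, b))'
   with P_i an explicit differential polynomial.  For a formal series
   h = sum h_m l^m and F_m = sum_i J_i h_(m-i), this gives
   2 sum_a h_a F_(m-a) = (Q_m)'  with  Q_m = sum P_i(h_a, h_b)  (i + a + b = m).
   The coefficient h_m enters Q_m only through P_0(h_0, h_m) + P_0(h_m, h_0),
   which is an invertible multiple of h_m; so the h_m can be chosen, as
   polynomials in local quantities, to make every Q_m (m > 0) vanish, and
   then, h_0 being invertible, F_m = 0 for all m by induction.  No
   antiderivative is ever taken.  With the pencil J_N, J_(N-1), ..., J_0 and
   h_0 = -2 (killed by J_N = -d) this series produces K_s = R^s K_0; with
   the pencil J_0, J_1, ..., J_N and h_0 = -u_0^(-1/2) (killed by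
   J_0 = u_0^(1/2) d u_0^(1/2)) it produces the negative flows. *)
From HB Require Import structures.
From mathcomp Require Import all_boot all_order all_algebra.
From mathcomp Require Import reals.
From mathcomp Require Import zify ring.
Import Order.TTheory GRing.Theory Num.Theory.
Local Open Scope ring_scope.

Section Derivation.
Local Set Implicit Arguments.
Local Unset Strict Implicit.
Variables (R : realType) (B : comAlgType R) (d : B -> B).
Hypothesis hd : is_derivation d.

Lemma derivationD x y : d (x + y) = d x + d y.
Proof. by case: hd. Qed.

Lemma derivationZ (c : R) x : d (c *: x) = c *: d x.
Proof. by case: hd => _ []. Qed.

Lemma derivationM x y : d (x * y) = d x * y + x * d y.
Proof. by case: hd => _ []. Qed.

Lemma derivation0 : d 0 = 0.
Proof. by apply: (addrI (d 0)); rewrite -derivationD !addr0. Qed.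

Lemma derivationN x : d (- x) = - d x.
Proof. by rewrite -scaleN1r derivationZ scaleN1r. Qed.

Lemma derivation1 : d 1 = 0.
Proof.
have := derivationM 1 1; rewrite !mul1r mulr1 => d1_double.
by apply: (addrI (d 1)); rewrite addr0 -d1_double.
Qed.

Lemma derivation_nat n : d n%:R = 0.
Proof. by rewrite -scaler_nat derivationZ derivation1 scaler0. Qed.

Lemma derivation_sum (I : Type) (r : seq I) (P : pred I) (F : I -> B) :
  d (\sum_(i <- r | P i) F i) = \sum_(i <- r | P i) d (F i).
Proof. exact: (big_morph d derivationD derivation0). Qed.

End Derivation.

Lemma natr_mul_algV (R : numFieldType) (B : algType R) n :
  (0 < n)%N -> n%:R * (n%:R^-1 : R)%:A = 1 :> B.
Proof.
move=> n_gt0; rewrite mulr_algr -scaler_nat scalerA mulVf ?scale1r //.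
by rewrite pnatr_eq0 -lt0n.
Qed.

Lemma half_add_half (R : numFieldType) (B : algType R) :
  (2^-1 : R)%:A + (2^-1 : R)%:A = 1 :> B.
Proof.
by rewrite -scalerDl; have := splitr (1 : R); rewrite mul1r => <-; rewrite scale1r.
Qed.

(* Turns scalings into products, so that [ring] can normalize them. *)
Lemma scaler_as_mul {R : pzSemiRingType} (B : lSemiAlgType R) (c : R) :
  exists e : B, forall x, c *: x = e * x.
Proof. by exists c%:A => x; rewrite mulr_algl. Qed.

Lemma big_ord_triangle_exchange {V : zmodType} (m : nat) (f : nat -> nat -> V) :
  \sum_(a < m.+1) \sum_(i < (m - a).+1) f a i =
  \sum_(i < m.+1) \sum_(a < (m - i).+1) f a i.
Proof.
have widen a : (a <= m)%N -> forall g : nat -> V,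
    \sum_(i < (m - a).+1) g i = \sum_(i < m.+1) (if (a + i <= m)%N then g i else 0).
  move=> le_am g; rewrite (big_ord_widen m.+1 g) ?ltnS ?leq_subr // big_mkcond.
  by apply: eq_bigr => i _; congr (if _ then _ else _); lia.
rewrite (eq_bigr _ (fun (a : 'I_m.+1) _ => widen a (ltn_ord a) (f a))).
rewrite [RHS](eq_bigr _ (fun (i : 'I_m.+1) _ => widen i (ltn_ord i) (f^~ i))).
rewrite exchange_big.
by apply: eq_bigr => a _; apply: eq_bigr => i _; rewrite addnC.
Qed.

Lemma big_ord_rev_sub {V : zmodType} (n : nat) (G : nat -> nat -> V) :
  \sum_(a < n.+1) G a (n - a)%N = \sum_(a < n.+1) G (n - a)%N a.
Proof.
rewrite (reindex_inj rev_ord_inj) /=; apply: eq_bigr => a _.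
by rewrite subSS subKn // -ltnS.
Qed.

Section ConvolutionSeries.
Local Set Implicit Arguments.
Local Unset Strict Implicit.
Variable B : comPzRingType.
Implicit Types (J : nat -> B -> B) (P : nat -> B -> B -> B) (k : nat -> B).

(* Coefficient of l^m in (sum_i l^i J_i) (sum_a l^a k_a). *)
Definition conv J k m : B := \sum_(i < m.+1) J i (k (m - i)%N).

(* Coefficient of l^m in sum_i l^i P_i(k(l), k(l)). *)
Definition quad P k m : B :=
  \sum_(i < m.+1) \sum_(a < (m - i).+1) P i (k a) (k (m - i - a)%N).

Lemma eq_quad P f g m :
  (forall a, (a <= m)%N -> f a = g a) -> quad P f m = quad P g m.
Proof.
move=> fg; apply: eq_bigr => i _; apply: eq_bigr => a _.
by move: (ltn_ord a) (ltn_ord i) => lt_a lt_i; rewrite !fg //; lia.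
Qed.

Variables (P : nat -> B -> B -> B) (k0 alpha : B).
Hypotheses (P0l : forall x, P 0%N k0 x = alpha * x)
           (P0r : forall x, P 0%N x k0 = alpha * x).

Lemma quad_top_affine f g n :
  f 0%N = k0 -> g 0%N = k0 -> (forall a, (a <= n)%N -> f a = g a) ->
  quad P f n.+1 - (alpha + alpha) * f n.+1 =
  quad P g n.+1 - (alpha + alpha) * g n.+1.
Proof.
move=> f0 g0 fg.
pose rest h := \sum_(a < n) P 0%N (h a.+1) (h (n - a)%N) +
  \sum_(i < n.+1) \sum_(a < (n - i).+1) P i.+1 (h a) (h (n - i - a)%N).
have split_top h : h 0%N = k0 ->
    quad P h n.+1 - (alpha + alpha) * h n.+1 = rest h.
  move=> h0; rewrite /quad big_ord_recl subn0 (big_ord_recl n.+1) big_ord_recr /=.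
  rewrite !subn0 subnn h0 P0l P0r /rest /bump /=.
  have -> x y z : alpha * x + (y + alpha * x) + z - (alpha + alpha) * x = y + z.
    by ring.
  by congr (_ + _); apply: eq_bigr => i _; rewrite add1n subSS.
rewrite !split_top //; congr (_ + _).
  by apply: eq_bigr => a _; move: (ltn_ord a) => lt_a; rewrite !fg //; lia.
apply: eq_bigr => i _; apply: eq_bigr => a _.
by move: (ltn_ord a) (ltn_ord i) => lt_a lt_i; rewrite !fg //; lia.
Qed.

Variable gamma : B.
Hypothesis gammaK : (alpha + alpha) * gamma = 1.

(* [quad_prefix m] solves Q_1 = ... = Q_m = 0 and is zero above degree m. *)
Fixpoint quad_prefix m : nat -> B :=
  if m is m'.+1 then
    let f := quad_prefix m' in
    fun a => if a == m then f m - gamma * quad P f m else f a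
  else fun a => if a == 0%N then k0 else 0.

Definition quad_solution a : B := quad_prefix a a.

Lemma quad_prefix0 m : quad_prefix m 0 = k0.
Proof. by elim: m. Qed.

Lemma quad_prefix_stable a m : (a <= m)%N -> quad_prefix m a = quad_solution a.
Proof.
rewrite /quad_solution; elim: m => [|m IHm]; first by rewrite leqn0 => /eqP->.
by rewrite leq_eqVlt => /predU1P[-> //|lt_am]; rewrite /= ifN ?IHm ?neq_ltn ?lt_am.
Qed.

Lemma quad_prefix_root m : quad P (quad_prefix m.+1) m.+1 = 0.
Proof.
set f := quad_prefix m.
have agree a : (a <= m)%N -> quad_prefix m.+1 a = f a.
  by move=> le_am; rewrite /= ifN // neq_ltn ltnS le_am.
have top : quad_prefix m.+1 m.+1 = f m.+1 - gamma * quad P f m.+1.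
  by rewrite /= eqxx.
have := quad_top_affine (quad_prefix0 m.+1) (quad_prefix0 m) agree.
rewrite top => /eqP; rewrite subr_eq => /eqP ->.
by rewrite mulrBr mulrA gammaK mul1r -/f; ring.
Qed.

Lemma quad_solution_root m : (0 < m)%N -> quad P quad_solution m = 0.
Proof.
case: m => // m _; rewrite -(quad_prefix_root m); apply: eq_quad => a le_am.
by rewrite quad_prefix_stable.
Qed.

End ConvolutionSeries.

Section Concomitant.
Local Set Implicit Arguments.
Local Unset Strict Implicit.
Variables (R : realType) (B : comAlgType R) (d : B -> B).
Variables (J : nat -> B -> B) (P : nat -> B -> B -> B).
Hypotheses (hd : is_derivation d)
  (concomitant : forall i a b, a * J i b + b * J i a = d (P i a b)).

Lemma sum_mul_conv_double (k : nat -> B) m :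
  (\sum_(a < m.+1) k a * conv J k (m - a)) *+ 2 = d (quad P k m).
Proof.
rewrite mulr2n.
have -> : \sum_(a < m.+1) k a * conv J k (m - a) =
    \sum_(i < m.+1) \sum_(a < (m - i).+1) k a * J i (k (m - i - a)%N).
  under eq_bigr do rewrite mulr_sumr.
  rewrite (big_ord_triangle_exchange m (fun a i => k a * J i (k (m - a - i)%N))).
  by apply: eq_bigr => i _; apply: eq_bigr => a _; rewrite subnAC.
rewrite -big_split /= (derivation_sum hd); apply: eq_bigr => i _.
rewrite (derivation_sum hd).
rewrite [X in X + _](big_ord_rev_sub (m - i) (fun a b => k a * J i (k b))).
by rewrite -big_split /=; apply: eq_bigr => a _; rewrite addrC concomitant.
Qed.

Lemma conv_eq0 (k : nat -> B) kinv :
  kinv * k 0%N = 1 -> conv J k 0 = 0 ->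
  (forall m, (0 < m)%N -> quad P k m = 0) -> forall m, conv J k m = 0.
Proof.
move=> kK conv0 quad0; elim/ltn_ind => -[//|m] IHm.
have := sum_mul_conv_double k m.+1; rewrite quad0 // (derivation0 hd).
rewrite big_ord_recl big1 => [|a _]; last first.
  by rewrite lift0 IHm ?mulr0 // subSS ltnS leq_subr.
rewrite subn0 addr0 -scaler_nat => /eqP.
rewrite scaler_eq0 pnatr_eq0 => /orP [//|/eqP hk].
by move: (congr1 (fun x => kinv * x) hk); rewrite mulr0 mulrA kK mul1r.
Qed.

End Concomitant.

Definition Pop {R : realType} {B : comAlgType R} (N : nat) (d : B -> B)
  (eps : nat -> R) (u : nat -> B) (i : nat) (a b : B) : B :=
  (epsf N eps i / 4) *: (a * d (d b) + d (d a) * b - d a * d b) +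
  ufld N u i * a * b.

Section Locality.
Local Set Implicit Arguments.
Local Unset Strict Implicit.
Variables (R : realType) (B : comAlgType R) (N : nat) (d : B -> B).
Variables (u : nat -> B) (w winv : B) (Lc : B -> Prop).
Hypothesis hL : local_subalg N d u w winv Lc.

Lemma local_winv : Lc winv. Proof. by case: hL => _ [_ []]. Qed.
Lemma local1 : Lc 1. Proof. by case: hL => _ [_ [_ []]]. Qed.
Lemma localD x y : Lc x -> Lc y -> Lc (x + y).
Proof. by case: hL => _ [_ [_ [_ [hD _]]]]; apply: hD. Qed.
Lemma localM x y : Lc x -> Lc y -> Lc (x * y).
Proof. by case: hL => _ [_ [_ [_ [_ [hM _]]]]]; apply: hM. Qed.
Lemma localZ (c : R) x : Lc x -> Lc (c *: x).
Proof. by case: hL => _ [_ [_ [_ [_ [_ [hZ _]]]]]]; apply: hZ. Qed.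
Lemma local_d x : Lc x -> Lc (d x).
Proof. by case: hL => _ [_ [_ [_ [_ [_ [_ hd]]]]]]; apply: hd. Qed.

Lemma local0 : Lc 0.
Proof. by rewrite -(scale0r (1 : B)); apply: localZ local1. Qed.

Lemma localN x : Lc x -> Lc (- x).
Proof. by rewrite -scaleN1r; apply: localZ. Qed.

Lemma local_alg (c : R) : Lc c%:A.
Proof. exact: localZ local1. Qed.

Lemma local_sum (I : Type) (r : seq I) (P : pred I) (F : I -> B) :
  (forall i, P i -> Lc (F i)) -> Lc (\sum_(i <- r | P i) F i).
Proof. exact: (big_ind Lc local0 localD). Qed.

Lemma local_ufld i : Lc (ufld N u i).
Proof.
rewrite /ufld; case: ifP => lt_iN; first by case: hL => hu _; apply: hu.
by case: ifP => _; [apply/localN/local1 | apply: local0].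
Qed.

Lemma local_quad_solution P k0 gamma :
  (forall i a b, Lc a -> Lc b -> Lc (P i a b)) -> Lc k0 -> Lc gamma ->
  forall a, Lc (quad_solution P k0 gamma a).
Proof.
move=> LP Lk0 Lg a; suff Lprefix m : Lc (quad_prefix P k0 gamma m a) by apply: Lprefix.
elim: m a => [|m IHm] a /=; first by case: eqP => _; [apply: Lk0 | apply: local0].
case: eqP => _; last exact: IHm.
apply: localD (IHm _) (localN (localM Lg _)).
by apply: local_sum => i _; apply: local_sum => b _; apply: LP.
Qed.

Lemma local_Jop eps i f : Lc f -> Lc (Jop N d eps u i f).
Proof.
move=> Lf; have LU := local_ufld i.
apply: localD; apply: localZ; first exact: local_d (local_d (local_d Lf)).
exact: localD (localM LU (local_d Lf)) (local_d (localM LU Lf)).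
Qed.

Lemma local_Pop eps i a b : Lc a -> Lc b -> Lc (Pop N d eps u i a b).
Proof.
move=> La Lb; have Ld2 x : Lc x -> Lc (d (d x)) by move=> Lx; apply/local_d/local_d.
apply: localD (localM (localM (local_ufld i) La) Lb); apply: localZ.
apply: localD (localN (localM (local_d La) (local_d Lb))).
exact: localD (localM La (Ld2 _ Lb)) (localM (Ld2 _ La) Lb).
Qed.

End Locality.

Section KdV.
Local Set Implicit Arguments.
Local Unset Strict Implicit.
Variables (R : realType) (B : comAlgType R) (N : nat) (d : B -> B).
Variables (eps : nat -> R) (u : nat -> B).
Hypotheses (hd : is_derivation d) (N_gt0 : (0 < N)%N).
Local Notation J := (Jop N d eps u).
Local Notation P := (Pop N d eps u).

Lemma Jop_concomitant i a b : a * J i b + b * J i a = d (P i a b).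
Proof.
rewrite /Jop /Pop !(derivationD hd, derivationZ hd, derivationN hd, derivationM hd).
have [e se] := scaler_as_mul B (epsf N eps i / 4).
have [t st] := scaler_as_mul B (2^-1 : R).
have tt1 : t + t = 1 by rewrite -[t]mulr1 -st half_add_half.
rewrite !se !st; move: (ufld N u i) => U; apply/eqP; rewrite -subr_eq0; apply/eqP.
transitivity ((t + t - 1) * (U * (a * d b + b * d a) + d U * a * b)); first ring.
by rewrite tt1 subrr mul0r.
Qed.

Lemma JopN i f : J i (- f) = - J i f.
Proof. by rewrite /Jop !(derivationN hd, mulrN) -opprD !scalerN -opprD. Qed.

Lemma Jop_gt i f : (N < i)%N -> J i f = 0.
Proof.
move=> lt_Ni; rewrite /Jop /epsf /ufld ifN; last by apply/negP; lia.
rewrite ifN ?ifN; [|by apply/negP; lia..].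
by rewrite mul0r scale0r add0r !mul0r (derivation0 hd) addr0 scaler0.
Qed.

Lemma Jop_const2 i : J i (- 2%:R) = - d (ufld N u i).
Proof.
rewrite /Jop !(derivationN hd, derivationM hd, derivation_nat hd).
rewrite !(derivation0 hd) oppr0 scaler0 add0r.
have [t st] := scaler_as_mul B (2^-1 : R).
have tt1 : t + t = 1 by rewrite -[t]mulr1 -st half_add_half.
rewrite st; move: (ufld N u i) => U; apply/eqP; rewrite -subr_eq0; apply/eqP.
transitivity ((t + t - 1) * - d U); first ring.
by rewrite tt1 subrr mul0r.
Qed.

Lemma JopN_const2 : J N (- 2%:R) = 0.
Proof.
by rewrite Jop_const2 /ufld ltnn eqxx (derivationN hd) (derivation1 hd) !oppr0.
Qed.

Lemma PopN_const2 x : P N (- 2%:R) x = 2%:R * x /\ P N x (- 2%:R) = 2%:R * x.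
Proof.
rewrite /Pop /epsf ltnn andbF /ufld ltnn eqxx mul0r !scale0r !add0r.
by split; ring.
Qed.

Definition Jrev i : B -> B := if (i <= N)%N then J (N - i) else fun=> 0.
Definition Prev i : B -> B -> B := if (i <= N)%N then P (N - i) else fun _ _ => 0.

(* -J_c h_0 = u_(c,x) for h_0 = -2, so these series start at K_0; and
   gamma = 1/4 inverts 2 alpha for alpha = 2 (PopN_const2). *)
Definition hpos : nat -> B := quad_solution Prev (- 2%:R) (4^-1 : R)%:A.

Lemma conv_hpos m : conv Jrev hpos m = 0.
Proof.
have concomitant i a b : a * Jrev i b + b * Jrev i a = d (Prev i a b).
  rewrite /Jrev /Prev; case: ifP => _; first exact: Jop_concomitant.
  by rewrite !mulr0 addr0 (derivation0 hd).
have Prev0 x : Prev 0 (- 2%:R) x = 2%:R * x /\ Prev 0 x (- 2%:R) = 2%:R * x.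
  by rewrite /Prev leq0n subn0; apply: PopN_const2.
apply: (conv_eq0 hd concomitant (kinv := - (2^-1 : R)%:A)).
- by rewrite /hpos /quad_solution /= mulrNN mulrC natr_mul_algV.
- by rewrite /conv big_ord1 /Jrev leq0n subn0 JopN_const2.
- move=> m' m'_gt0.
  apply: (quad_solution_root (alpha := 2%:R) _ _ _ m'_gt0) => [x|x|].
  + exact: (Prev0 x).1.
  + exact: (Prev0 x).2.
  + by rewrite -natrD natr_mul_algV.
Qed.

Definition Kpos s c : B :=
  - \sum_(j < s.+1) (if (j <= c)%N then J (c - j) (hpos (s - j)) else 0).

Lemma Kpos0 c : Kpos 0 c = K0 N d u c.
Proof.
by rewrite /Kpos big_ord1 leq0n !subn0 /hpos /quad_solution /= Jop_const2 opprK.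
Qed.

(* Degree s+1 of conv Jrev hpos = 0 reads J_N h_(s+1) = (K_s)_(N-1): the local
   h_(s+1) plays the role of J_N^(-1) (K_s)_(N-1). *)
Lemma Kpos_succ s : Rrel N d eps u (Kpos s) (Kpos s.+1).
Proof.
exists (hpos s.+1); split.
  move: (conv_hpos s.+1); rewrite /conv big_ord_recl /Jrev leq0n !subn0.
  move/eqP; rewrite addr_eq0 => /eqP ->; rewrite /Kpos; congr (- _).
  apply: eq_bigr => j _; rewrite lift0 subSS.
  have -> : (j.+1 <= N)%N = (j <= N.-1)%N by lia.
  by case: ifP => // _; congr J; lia.
move=> c lt_cN; rewrite /Kpos big_ord_recl !subn0 leq0n.
case: c lt_cN => [|c] _; first by rewrite big1 ?addr0 ?sub0r.
by rewrite opprD addrC.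
Qed.

Lemma local_Kpos w winv Lc :
  local_subalg N d u w winv Lc -> forall s c, Lc (Kpos s c).
Proof.
move=> hL s c; apply: (localN hL); apply: (local_sum hL) => j _.
case: ifP => _; last exact: local0 hL.
apply: (local_Jop hL); apply: (local_quad_solution hL).
- move=> i a b La Lb; rewrite /Prev; case: ifP => _; last exact: local0 hL.
  exact: (local_Pop hL eps (N - i) La Lb).
- by rewrite -scaler_nat; apply: (localN hL); apply: (local_alg hL).
- by apply: (localZ hL); apply: (local1 hL).
Qed.

Section NegativeFlows.
Variables (w winv : B).
Hypotheses (w_sqrt : w * w = u 0%N) (wK : w * winv = 1).

(* J_0 = w d w, and d (w winv) = 0 gives w (d winv) = - (d w) winv. *)
Lemma Jop0_winv : J 0 winv = 0.
Proof.
have d_wK : d w * winv + w * d winv = 0.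
  by rewrite -(derivationM hd) wK (derivation1 hd).
rewrite /Jop /epsf /= mul0r scale0r add0r /ufld N_gt0.
rewrite -w_sqrt -[w * w * winv]mulrA wK mulr1.
by rewrite -[d w]mulr1 -wK mulrCA -mulrA -mulrDr addrC d_wK mulr0 scaler0.
Qed.

Lemma Pop0_winv x : P 0 (- winv) x = - w * x /\ P 0 x (- winv) = - w * x.
Proof.
rewrite /Pop /epsf /= !mul0r !scale0r !add0r /ufld N_gt0 /= -w_sqrt.
have e : w * w * - winv * x = - w * x by rewrite mulrN -(mulrA w w) wK mulr1 mulNr.
by split => //; rewrite -e; ring.
Qed.

Definition hneg : nat -> B := quad_solution P (- winv) (- ((2^-1 : R)%:A * winv)).

Lemma conv_hneg m : conv J hneg m = 0.
Proof.
apply: (conv_eq0 hd Jop_concomitant (kinv := - w)).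
- by rewrite /hneg /quad_solution /= mulrNN.
- by rewrite /conv big_ord1 /hneg /quad_solution /= JopN Jop0_winv oppr0.
- move=> m' m'_gt0; have P0 := Pop0_winv.
  apply: (quad_solution_root (alpha := - w) _ _ _ m'_gt0) => [x|x|].
  + exact: (P0 x).1.
  + exact: (P0 x).2.
  + by rewrite -opprD mulrNN mulrDl mulrCA wK mulr1 half_add_half.
Qed.

Definition Kneg s c : B := \sum_(j < s.+1) J (c + j).+1 (hneg (s - j)).

Lemma Kneg0 c : Kneg 0 c = Km1 N d eps u winv c.
Proof. by rewrite /Kneg big_ord1 addn0 subn0 /hneg /quad_solution /= JopN. Qed.

(* Here R is inverted: J_N h_(s+1) is the last component of K_(-(s+2)) since
   J_i = 0 for i > N, and degree s+1 of conv J hneg = 0 gives component 0. *)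
Lemma Kneg_succ s : Rrel N d eps u (Kneg s.+1) (Kneg s).
Proof.
exists (hneg s.+1); split.
  rewrite /Kneg big_ord_recl addn0 prednK // subn0 big1 ?addr0 // => j _.
  by apply: Jop_gt; rewrite lift0; lia.
move=> c lt_cN; case: c lt_cN => [|c] _.
  move: (conv_hneg s.+1); rewrite /conv big_ord_recl subn0.
  move/eqP; rewrite addr_eq0 => /eqP ->; rewrite sub0r opprK.
  by apply: eq_bigr => j _; rewrite lift0.
rewrite [in RHS]/Kneg big_ord_recl addn0 subn0 addrAC subrr add0r.
by apply: eq_bigr => j _; rewrite lift0 addnS addSn subSS.
Qed.

Lemma local_Kneg Lc :
  local_subalg N d u w winv Lc -> forall s c, Lc (Kneg s c).
Proof.
move=> hL s c; apply: (local_sum hL) => j _.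
apply: (local_Jop hL); apply: (local_quad_solution hL).
- by move=> i a b La Lb; apply: (local_Pop hL eps i La Lb).
- by apply: (localN hL); apply: (local_winv hL).
- apply: (localN hL); apply: (localM hL); first exact: (local_alg hL).
  exact: (local_winv hL).
Qed.

End NegativeFlows.

End KdV.

Theorem mainTheorem6 (R : realType) (B : comAlgType R) (N : nat)
  (d : B -> B) (eps : nat -> R) (u : nat -> B) (w winv : B)
  (Lc : B -> Prop) :
  (0 < N)%N ->
  is_derivation d ->
  (forall b : B, exists a : B, d a = b) ->
  w * w = u 0%N ->
  w * winv = 1 ->
  local_subalg N d u w winv Lc ->
  (* K_s = R^s K_0 is local for all s >= 0 *)
  (exists Kp : nat -> nat -> B,
      (forall c, (c < N)%N -> Kp 0%N c = K0 N d u c) /\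
      (forall s, Rrel N d eps u (Kp s) (Kp s.+1)) /\
      (forall s c, (c < N)%N -> Lc (Kp s c))) /\
  (* Kn s = K_{-(s+1)};  K_{-(s+2)} = R^{-1} K_{-(s+1)} is local *)
  (exists Kn : nat -> nat -> B,
      (forall c, (c < N)%N -> Kn 0%N c = Km1 N d eps u winv c) /\
      (forall s, Rrel N d eps u (Kn s.+1) (Kn s)) /\
      (forall s c, (c < N)%N -> Lc (Kn s c))).
Proof.
move=> N_gt0 hd _ w_sqrt wK hL; split.
  exists (Kpos N d eps u); split; first by move=> c _; rewrite Kpos0.
  split; first exact: Kpos_succ.
  by move=> s c _; apply: local_Kpos hL s c.
exists (Kneg N d eps u winv); split; first by move=> c _; rewrite Kneg0.
split; first exact: Kneg_succ w_sqrt wK.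
by move=> s c _; apply: local_Kneg hL s c.
Qed.
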